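(* Let $D=\{\vec\gamma\in\mathbb{R}^3:\gamma_3\neq0\}$ and $\vec\mu(\vec M,\vec\gamma)=\big(0,0,\frac{\vec M\cdot\vec\gamma}{\gamma_3}\big)$ on $\mathbb{R}^3\times D$. Then $\Pi_{\vec\mu}$ defines a Poisson bracket on $\mathbb{R}^3\times D$ and $C(\vec M,\vec\gamma)=\gamma_3\,(\vec M\cdot\vec\gamma)$ is a Casimir function of $\Pi_{\vec\mu}$.
   Context: Coordinates on $\mathbb{R}^6$ are $(\vec M,\vec\gamma)=(M_1,M_2,M_3,\gamma_1,\gamma_2,\gamma_3)$. For a smooth $\vec\mu=(\mu_1,\mu_2,\mu_3)$ of $(\vec M,\vec\gamma)$, $\Pi_{\vec\mu}$ is the skew-symmetric $6\times6$ matrix $$\Pi_{\vec\mu}=\begin{bmatrix}0&-M_3-\mu_3&M_2+\mu_2&0&-\gamma_3&\gamma_2\\ M_3+\mu_3&0&-M_1-\mu_1&\gamma_3&0&-\gamma_1\\ -M_2-\mu_2&M_1+\mu_1&0&-\gamma_2&\gamma_1&0\\ 0&-\gamma_3&\gamma_2&0&0&0\\ \gamma_3&0&-\gamma_1&0&0&0\\ -\gamma_2&\gamma_1&0&0&0&0\end{bmatrix},$$ it ''defines a Poisson bracket'' if $\{f,g\}_{\vec\mu}=(\nabla f)^T\Pi_{\vec\mu}\nabla g$ satisfies the Jacobi identity, and a Casimir function is a smooth $C$ with $\Pi_{\vec\mu}\nabla C=0$. *)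

From Stdlib Require Import Reals Lra ClassicalEpsilon.
Open Scope R_scope.

Record pt6 : Type := P6 { M1 : R; M2 : R; M3 : R; g1 : R; g2 : R; g3 : R }.

Definition coord (i : nat) (x : pt6) : R :=
  match i with
  | 0 => M1 x | 1 => M2 x | 2 => M3 x
  | 3 => g1 x | 4 => g2 x | _ => g3 x
  end.

Definition upd (i : nat) (t : R) (x : pt6) : pt6 :=
  match i with
  | 0 => P6 t (M2 x) (M3 x) (g1 x) (g2 x) (g3 x)
  | 1 => P6 (M1 x) t (M3 x) (g1 x) (g2 x) (g3 x)
  | 2 => P6 (M1 x) (M2 x) t (g1 x) (g2 x) (g3 x)
  | 3 => P6 (M1 x) (M2 x) (M3 x) t (g2 x) (g3 x)
  | 4 => P6 (M1 x) (M2 x) (M3 x) (g1 x) t (g3 x)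
  | _ => P6 (M1 x) (M2 x) (M3 x) (g1 x) (g2 x) t
  end.

(* l1 distance on R^6 (induces the usual topology) *)
Definition dist6 (x y : pt6) : R :=
  Rabs (M1 x - M1 y) + Rabs (M2 x - M2 y) + Rabs (M3 x - M3 y)
  + Rabs (g1 x - g1 y) + Rabs (g2 x - g2 y) + Rabs (g3 x - g3 y).

Definition open6 (U : pt6 -> Prop) : Prop :=
  forall x, U x -> exists d, 0 < d /\ forall y, dist6 y x < d -> U y.

Definition continuous_on6 (U : pt6 -> Prop) (f : pt6 -> R) : Prop :=
  forall x, U x -> forall eps, 0 < eps ->
    exists d, 0 < d /\ forall y, U y -> dist6 y x < d -> Rabs (f y - f x) < eps.

Definition has_partial (i : nat) (f : pt6 -> R) (x : pt6) (l : R) : Prop :=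
  derivable_pt_lim (fun t => f (upd i t x)) (coord i x) l.

Fixpoint Ck (k : nat) (U : pt6 -> Prop) (f : pt6 -> R) : Prop :=
  match k with
  | O => continuous_on6 U f
  | S k' => continuous_on6 U f /\
      forall i, (i < 6)%nat -> exists g : pt6 -> R,
        (forall x, U x -> has_partial i f x (g x)) /\ Ck k' U g
  end.

Definition smooth_on (U : pt6 -> Prop) (f : pt6 -> R) : Prop :=
  forall k, Ck k U f.

(* The i-th partial derivative of f at x (chosen; meaningful where it exists). *)
Definition pd (i : nat) (f : pt6 -> R) (x : pt6) : R :=
  epsilon (inhabits 0) (fun l => has_partial i f x l).

Definition PiMat (mu1 mu2 mu3 : pt6 -> R) (x : pt6) (i j : nat) : R :=
  let m1 := M1 x + mu1 x in let m2 := M2 x + mu2 x in let m3 := M3 x + mu3 x in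
  match i, j with
  | 0, 1 => - m3 | 0, 2 => m2 | 0, 4 => - g3 x | 0, 5 => g2 x
  | 1, 0 => m3 | 1, 2 => - m1 | 1, 3 => g3 x | 1, 5 => - g1 x
  | 2, 0 => - m2 | 2, 1 => m1 | 2, 3 => - g2 x | 2, 4 => g1 x
  | 3, 1 => - g3 x | 3, 2 => g2 x
  | 4, 0 => g3 x | 4, 2 => - g1 x
  | 5, 0 => - g2 x | 5, 1 => g1 x
  | _, _ => 0
  end.

Definition bracket (mu1 mu2 mu3 : pt6 -> R) (f g : pt6 -> R) (x : pt6) : R :=
  sum_f_R0 (fun i => sum_f_R0 (fun j =>
     pd i f x * PiMat mu1 mu2 mu3 x i j * pd j g x) 5) 5.

Definition defines_Poisson_on (U : pt6 -> Prop) (mu1 mu2 mu3 : pt6 -> R) : Prop :=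
  forall f g h : pt6 -> R, smooth_on U f -> smooth_on U g -> smooth_on U h ->
  forall x, U x ->
    bracket mu1 mu2 mu3 f (bracket mu1 mu2 mu3 g h) x
  + bracket mu1 mu2 mu3 g (bracket mu1 mu2 mu3 h f) x
  + bracket mu1 mu2 mu3 h (bracket mu1 mu2 mu3 f g) x = 0.

Definition Casimir_on (U : pt6 -> Prop) (mu1 mu2 mu3 : pt6 -> R) (C : pt6 -> R) : Prop :=
  smooth_on U C /\
  forall x, U x -> forall i, (i < 6)%nat ->
    sum_f_R0 (fun j => PiMat mu1 mu2 mu3 x i j * pd j C x) 5 = 0.

Definition D13 (x : pt6) : Prop := g3 x <> 0.
Definition Mdotg (x : pt6) : R := M1 x * g1 x + M2 x * g2 x + M3 x * g3 x.
Definition mu13_1 (x : pt6) : R := 0.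
Definition mu13_2 (x : pt6) : R := 0.
Definition mu13_3 (x : pt6) : R := Mdotg x / g3 x.
Definition C13 (x : pt6) : R := g3 x * Mdotg x.

From Stdlib Require Import Reals.
Open Scope R_scope.
From Stdlib Require Import Lra Lia ClassicalEpsilon.

(* For a bivector field Pi, expanding {f,{g,h}} + cyclic produces terms with
   second derivatives of f, g, h and terms with first derivatives of the
   entries of Pi.  By the symmetry of second derivatives (Schwarz) and the
   skew-symmetry of Pi the former cancel, so the Jacobi identity is an
   algebraic identity in M, gamma and 1/gamma_3 once Pi and its derivatives
   are written out for mu = (0, 0, M.gamma/gamma_3).  The Casimir property is
   the direct computation Pi grad C = 0, using
   grad C = (gamma_3 gamma, gamma_3 M + (M.gamma) e_3). *)

Ltac case_index i := destruct i as [|[|[|[|[|[|i]]]]]]; try lia.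

Lemma coord_upd_same i t x : coord i (upd i t x) = t.
Proof. destruct i as [|[|[|[|[|i]]]]]; reflexivity. Qed.

Lemma upd_coord i x : upd i (coord i x) x = x.
Proof. destruct x; destruct i as [|[|[|[|[|i]]]]]; reflexivity. Qed.

Lemma upd_upd_same i t s x : upd i t (upd i s x) = upd i t x.
Proof. destruct x; destruct i as [|[|[|[|[|i]]]]]; reflexivity. Qed.

Lemma coord_upd_other i j t x :
  (i < 6)%nat -> (j < 6)%nat -> i <> j -> coord j (upd i t x) = coord j x.
Proof. intros; case_index i; case_index j; reflexivity. Qed.

Lemma upd_comm i j s t x :
  (i < 6)%nat -> (j < 6)%nat -> i <> j -> upd i s (upd j t x) = upd j t (upd i s x).
Proof. intros; destruct x; case_index i; case_index j; reflexivity. Qed.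

Lemma upd_coord_other i j t x :
  (i < 6)%nat -> (j < 6)%nat -> i <> j -> upd j (coord j x) (upd i t x) = upd i t x.
Proof. intros; rewrite <- (coord_upd_other i j t x) by auto; apply upd_coord. Qed.

Lemma dist6_upd i t y : (i < 6)%nat -> dist6 (upd i t y) y = Rabs (t - coord i y).
Proof.
  intros; destruct y; unfold dist6; case_index i; simpl;
  rewrite ?Rminus_diag, ?Rabs_R0; ring.
Qed.

Lemma Rabs_sub_triang a b c : Rabs (a - c) <= Rabs (a - b) + Rabs (b - c).
Proof. replace (a - c) with ((a - b) + (b - c)) by ring; apply Rabs_triang. Qed.

Lemma dist6_triang a b c : dist6 a c <= dist6 a b + dist6 b c.
Proof.
  unfold dist6.
  pose proof (Rabs_sub_triang (M1 a) (M1 b) (M1 c)).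
  pose proof (Rabs_sub_triang (M2 a) (M2 b) (M2 c)).
  pose proof (Rabs_sub_triang (M3 a) (M3 b) (M3 c)).
  pose proof (Rabs_sub_triang (g1 a) (g1 b) (g1 c)).
  pose proof (Rabs_sub_triang (g2 a) (g2 b) (g2 c)).
  pose proof (Rabs_sub_triang (g3 a) (g3 b) (g3 c)).
  lra.
Qed.

Lemma coord_dist6_le k y x : (k < 6)%nat -> Rabs (coord k y - coord k x) <= dist6 y x.
Proof.
  intros; unfold dist6.
  pose proof (Rabs_pos (M1 y - M1 x)); pose proof (Rabs_pos (M2 y - M2 x)).
  pose proof (Rabs_pos (M3 y - M3 x)); pose proof (Rabs_pos (g1 y - g1 x)).
  pose proof (Rabs_pos (g2 y - g2 x)); pose proof (Rabs_pos (g3 y - g3 x)).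
  case_index k; simpl; lra.
Qed.

Lemma open_D13 : open6 D13.
Proof.
  intros x Hx; exists (Rabs (g3 x)); split; [now apply Rabs_pos_lt|].
  intros y Hy Hy0; unfold D13 in *.
  pose proof (coord_dist6_le 5 y x ltac:(lia)) as H; simpl in H.
  rewrite Hy0, Rminus_0_l, Rabs_Ropp in H; lra.
Qed.

Definition kron (j k : nat) : R := if Nat.eqb j k then 1 else 0.

Lemma has_partial_eq_val j f x l l' : has_partial j f x l -> l = l' -> has_partial j f x l'.
Proof. now intros H <-. Qed.

Lemma has_partial_plus j f g x l1 l2 :
  has_partial j f x l1 -> has_partial j g x l2 ->
  has_partial j (fun y => f y + g y) x (l1 + l2).
Proof. exact (derivable_pt_lim_plus _ _ _ _ _). Qed.

Lemma has_partial_opp j f x l :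
  has_partial j f x l -> has_partial j (fun y => - f y) x (- l).
Proof. exact (derivable_pt_lim_opp _ _ _). Qed.

Lemma has_partial_mult j f g x l1 l2 :
  has_partial j f x l1 -> has_partial j g x l2 ->
  has_partial j (fun y => f y * g y) x (l1 * g x + f x * l2).
Proof.
  intros H1 H2; pose proof (derivable_pt_lim_mult _ _ _ _ _ H1 H2) as H.
  unfold has_partial; simpl in H; now rewrite upd_coord in H.
Qed.

Lemma has_partial_const j c x : has_partial j (fun _ => c) x 0.
Proof. exact (derivable_pt_lim_const c _). Qed.

Lemma has_partial_coord j k x :
  (j < 6)%nat -> (k < 6)%nat -> has_partial j (coord k) x (kron j k).
Proof.
  intros; unfold has_partial, kron; case_index j; case_index k; simpl;
  first [exact (derivable_pt_lim_id _) | exact (derivable_pt_lim_const _ _)].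
Qed.

Lemma has_partial_inv_g3 j x : (j < 6)%nat -> g3 x <> 0 ->
  has_partial j (fun y => / g3 y) x (- kron j 5 * (/ g3 x * / g3 x)).
Proof.
  intros Hj Hx.
  pose proof (derivable_pt_lim_div (fun _ => 1) (fun t => coord 5 (upd j t x)) (coord j x)
    0 (kron j 5) (derivable_pt_lim_const _ _) (has_partial_coord j 5 x Hj ltac:(lia))) as H.
  simpl in H; rewrite upd_coord in H; specialize (H Hx).
  unfold has_partial.
  replace (- kron j 5 * (/ g3 x * / g3 x)) with ((0 * g3 x - kron j 5 * 1) / (g3 x)²)
    by (unfold Rsqr; field; auto).
  eapply derivable_pt_lim_ext; [|exact H].
  intros t; unfold div_fct; cbv beta; simpl; unfold Rdiv; ring.
Qed.

Lemma has_partial_sum j (F : nat -> pt6 -> R) (L : nat -> R) x n :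
  (forall i, (i <= n)%nat -> has_partial j (F i) x (L i)) ->
  has_partial j (fun y => sum_f_R0 (fun i => F i y) n) x (sum_f_R0 L n).
Proof.
  induction n; intros H; simpl; [apply H; lia|].
  apply has_partial_plus; [apply IHn; intros|]; apply H; lia.
Qed.

Lemma pd_of_has_partial j f x l : has_partial j f x l -> pd j f x = l.
Proof.
  intros H; unfold pd.
  pose proof (epsilon_spec (inhabits 0) (fun l => has_partial j f x l) (ex_intro _ l H)).
  exact (uniqueness_limite _ _ _ _ H0 H).
Qed.

Lemma has_partial_line i f c y l :
  has_partial i f (upd i c y) l -> derivable_pt_lim (fun t => f (upd i t y)) c l.
Proof.
  unfold has_partial; rewrite coord_upd_same.
  apply derivable_pt_lim_ext; intros; now rewrite upd_upd_same.
Qed.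

Lemma has_partial_local (U : pt6 -> Prop) j f g x l d :
  (j < 6)%nat -> 0 < d -> (forall y, dist6 y x < d -> U y) ->
  (forall y, U y -> f y = g y) -> has_partial j f x l -> has_partial j g x l.
Proof.
  intros Hj Hd HU E; unfold has_partial.
  apply derivable_pt_lim_locally_ext with (coord j x - d) (coord j x + d); [lra|].
  intros t Ht; apply E, HU; rewrite dist6_upd by auto; apply Rabs_def1; lra.
Qed.

(** * Symmetry of second derivatives *)

Section Schwarz.

Variable U : pt6 -> Prop.

(* Two applications of the mean value theorem to the mixed difference
   f(x + s e_i + t e_j) - f(x + s e_i) - f(x + t e_j) + f(x). *)
Lemma mixed_difference_MVT f fi fij i j x s t d :
  (i < 6)%nat -> (j < 6)%nat -> i <> j -> 0 < s -> 0 < t -> s + t < d ->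
  (forall y, dist6 y x < d -> U y) ->
  (forall y, U y -> has_partial i f y (fi y)) ->
  (forall y, U y -> has_partial j fi y (fij y)) ->
  exists q, dist6 q x < s + t /\
   f (upd i (coord i x + s) (upd j (coord j x + t) x)) - f (upd i (coord i x + s) x)
   - f (upd j (coord j x + t) x) + f x = s * t * fij q.
Proof.
  intros Hi Hj Hij Hs Ht Hd HU Hf Hfi.
  set (a := coord i x); set (b := coord j x).
  assert (Hrect : forall u v, a <= u <= a + s -> b <= v <= b + t ->
     dist6 (upd j v (upd i u x)) x <= (v - b) + (u - a)).
  { intros u v Hu Hv; eapply Rle_trans; [apply dist6_triang with (b := upd i u x)|].
    rewrite !dist6_upd, coord_upd_other by auto; fold a b; rewrite !Rabs_right; lra. }
  assert (HUrect : forall u v, a <= u <= a + s -> b <= v <= b + t -> U (upd j v (upd i u x))).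
  { intros u v Hu Hv; apply HU; specialize (Hrect u v Hu Hv); lra. }
  destruct (MVT_cor2 (fun u => f (upd i u (upd j (b + t) x)) - f (upd i u x))
     (fun u => fi (upd i u (upd j (b + t) x)) - fi (upd i u x)) a (a + s))
    as [u [Hu Hu_range]]; [lra| |].
  { intros c Hc; apply derivable_pt_lim_minus; apply has_partial_line, Hf.
    - rewrite upd_comm by auto; apply HUrect; lra.
    - rewrite <- (upd_coord_other i j c x) by auto; apply HUrect; fold b; lra. }
  destruct (MVT_cor2 (fun v => fi (upd j v (upd i u x)))
     (fun v => fij (upd j v (upd i u x))) b (b + t)) as [v [Hv Hv_range]]; [lra| |].
  { intros c Hc; apply has_partial_line, Hfi, HUrect; lra. }
  exists (upd j v (upd i u x)); split; [specialize (Hrect u v); lra|].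
  cbv beta in Hu, Hv; unfold a, b in *.
  rewrite upd_coord_other, upd_coord in Hu by auto.
  rewrite upd_coord_other in Hv by auto.
  rewrite !(upd_comm i j) in Hu by auto; rewrite Hv in Hu.
  rewrite (upd_comm i j (coord i x + s)) by auto.
  transitivity (fij (upd j v (upd i u x)) * (coord j x + t - coord j x)
                * (coord i x + s - coord i x)); [rewrite <- Hu|]; ring.
Qed.

Hypothesis U_open : open6 U.

Lemma Ck2_partials f i : Ck 2 U f -> (i < 6)%nat -> exists fi,
  (forall y, U y -> has_partial i f y (fi y)) /\
  forall j, (j < 6)%nat -> exists fij,
    (forall y, U y -> has_partial j fi y (fij y)) /\ continuous_on6 U fij.
Proof.
  intros [_ H] Hi; destruct (H i Hi) as [fi [Hfi [_ H2]]].
  exists fi; split; auto.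
Qed.

Lemma has_partial_pd f fi fij i j x : U x -> (j < 6)%nat ->
  (forall y, U y -> has_partial i f y (fi y)) ->
  (forall y, U y -> has_partial j fi y (fij y)) ->
  has_partial j (pd i f) x (fij x).
Proof.
  intros Hx Hj Hfi Hfij; destruct (U_open x Hx) as [d [Hd HU]].
  apply (has_partial_local U j fi (pd i f) x _ d Hj Hd HU); [|now apply Hfij].
  intros y Hy; symmetry; now apply pd_of_has_partial, Hfi.
Qed.

Lemma Ck2_has_partial_pd f i j x : Ck 2 U f -> U x -> (i < 6)%nat -> (j < 6)%nat ->
  has_partial j (pd i f) x (pd j (pd i f) x).
Proof.
  intros Hf Hx Hi Hj; destruct (Ck2_partials f i Hf Hi) as [fi [Hfi H]].
  destruct (H j Hj) as [fij [Hfij _]].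
  pose proof (has_partial_pd f fi fij i j x Hx Hj Hfi Hfij) as K.
  now rewrite (pd_of_has_partial _ _ _ _ K).
Qed.

Lemma eq_of_dist_lt a b : (forall eps, 0 < eps -> Rabs (a - b) < 2 * eps) -> a = b.
Proof.
  intros H; destruct (Req_dec a b) as [|Hn]; auto.
  assert (0 < Rabs (a - b)) by (apply Rabs_pos_lt; lra).
  specialize (H (Rabs (a - b) / 4) ltac:(lra)); lra.
Qed.

(* Both mixed second partials are values of continuous functions at points
   where the same mixed difference quotient is attained, arbitrarily close to x. *)
Lemma schwarz f i j x : Ck 2 U f -> U x -> (i < 6)%nat -> (j < 6)%nat ->
  pd j (pd i f) x = pd i (pd j f) x.
Proof.
  intros Hf Hx Hi Hj; destruct (Nat.eq_dec i j) as [->|Hij]; auto.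
  destruct (Ck2_partials f i Hf Hi) as [fi [Hfi H]].
  destruct (H j Hj) as [fij [Hfij Cij]].
  destruct (Ck2_partials f j Hf Hj) as [fj [Hfj H']].
  destruct (H' i Hi) as [fji [Hfji Cji]].
  rewrite (pd_of_has_partial _ _ _ _ (has_partial_pd f fi fij i j x Hx Hj Hfi Hfij)).
  rewrite (pd_of_has_partial _ _ _ _ (has_partial_pd f fj fji j i x Hx Hi Hfj Hfji)).
  destruct (U_open x Hx) as [d [Hd HU]].
  apply eq_of_dist_lt; intros eps He.
  destruct (Cij x Hx eps He) as [d1 [Hd1 K1]].
  destruct (Cji x Hx eps He) as [d2 [Hd2 K2]].
  set (r := Rmin d (Rmin d1 d2)).
  assert (0 < r) by (repeat apply Rmin_pos; auto).
  assert (r <= d /\ r <= d1 /\ r <= d2) as [? [? ?]].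
  { unfold r; repeat split; eauto using Rmin_l, Rmin_r, Rle_trans. }
  set (s := r / 3); assert (0 < s) by (unfold s; lra).
  destruct (mixed_difference_MVT f fi fij i j x s s d Hi Hj Hij
    ltac:(lra) ltac:(lra) ltac:(unfold s; lra) HU Hfi Hfij) as [q1 [Hq1 E1]].
  destruct (mixed_difference_MVT f fj fji j i x s s d Hj Hi (not_eq_sym Hij)
    ltac:(lra) ltac:(lra) ltac:(unfold s; lra) HU Hfj Hfji) as [q2 [Hq2 E2]].
  rewrite (upd_comm j i) in E2 by auto.
  assert (E : fij q1 = fji q2).
  { apply Rmult_eq_reg_l with (s * s); [rewrite <- E1, <- E2; ring|nra]. }
  assert (A1 : Rabs (fij q1 - fij x) < eps) by (apply K1; [apply HU|]; unfold s in *; lra).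
  assert (A2 : Rabs (fji q2 - fji x) < eps) by (apply K2; [apply HU|]; unfold s in *; lra).
  pose proof (Rabs_sub_triang (fij x) (fij q1) (fji x)) as T.
  rewrite E in T, A1; rewrite Rabs_minus_sym in A1; lra.
Qed.

Lemma has_partial_bracket mu1 mu2 mu3 (dPi : nat -> nat -> R) g h j x :
  Ck 2 U g -> Ck 2 U h -> U x -> (j < 6)%nat ->
  (forall k l, has_partial j (fun y => PiMat mu1 mu2 mu3 y k l) x (dPi k l)) ->
  has_partial j (bracket mu1 mu2 mu3 g h) x
    (sum_f_R0 (fun k => sum_f_R0 (fun l =>
       (pd j (pd k g) x * PiMat mu1 mu2 mu3 x k l + pd k g x * dPi k l) * pd l h x
       + pd k g x * PiMat mu1 mu2 mu3 x k l * pd j (pd l h) x) 5) 5).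
Proof.
  intros Hg Hh Hx Hj HPi; unfold bracket.
  apply has_partial_sum; intros k Hk; apply has_partial_sum; intros l Hl.
  eapply has_partial_eq_val.
  - apply has_partial_mult; [apply has_partial_mult|];
      auto using Ck2_has_partial_pd with arith.
  - cbv beta; ring.
Qed.

End Schwarz.

Lemma bracket_of_partials mu1 mu2 mu3 f B V x :
  (forall j, (j < 6)%nat -> has_partial j B x (V j)) ->
  bracket mu1 mu2 mu3 f B x =
  sum_f_R0 (fun i => sum_f_R0 (fun j => pd i f x * PiMat mu1 mu2 mu3 x i j * V j) 5) 5.
Proof.
  intros H; unfold bracket; apply sum_eq; intros i Hi; apply sum_eq; intros j Hj.
  now rewrite (pd_of_has_partial _ _ _ _ (H j ltac:(lia))).
Qed.

(** * The Jacobi identity for mu = (0, 0, M.gamma/gamma_3) *)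

Definition Pi13 := PiMat mu13_1 mu13_2 mu13_3.

Definition dMdotg j x : R :=
  (kron j 0 * g1 x + M1 x * kron j 3) + (kron j 1 * g2 x + M2 x * kron j 4)
  + (kron j 2 * g3 x + M3 x * kron j 5).

Definition dmu13_3 j x : R :=
  dMdotg j x * / g3 x + Mdotg x * (- kron j 5 * (/ g3 x * / g3 x)).

Definition dPi13 (j : nat) (x : pt6) (i k : nat) : R :=
  let m1 := kron j 0 in let m2 := kron j 1 in let m3 := kron j 2 + dmu13_3 j x in
  match i, k with
  | 0, 1 => - m3 | 0, 2 => m2 | 0, 4 => - kron j 5 | 0, 5 => kron j 4
  | 1, 0 => m3 | 1, 2 => - m1 | 1, 3 => kron j 5 | 1, 5 => - kron j 3
  | 2, 0 => - m2 | 2, 1 => m1 | 2, 3 => - kron j 4 | 2, 4 => kron j 3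
  | 3, 1 => - kron j 5 | 3, 2 => kron j 4
  | 4, 0 => kron j 5 | 4, 2 => - kron j 3
  | 5, 0 => - kron j 4 | 5, 1 => kron j 3
  | _, _ => 0
  end.

Ltac solve_has_partial := repeat first
  [ apply has_partial_plus | apply has_partial_opp | apply has_partial_mult
  | apply has_partial_const
  | apply has_partial_inv_g3; [lia | assumption]
  | apply (has_partial_coord _ 0); lia | apply (has_partial_coord _ 1); lia
  | apply (has_partial_coord _ 2); lia | apply (has_partial_coord _ 3); lia
  | apply (has_partial_coord _ 4); lia | apply (has_partial_coord _ 5); lia ].

Lemma has_partial_Pi13 j x k l : (j < 6)%nat -> g3 x <> 0 ->
  has_partial j (fun y => Pi13 y k l) x (dPi13 j x k l).
Proof.
  intros Hj Hx; unfold Pi13, PiMat, mu13_1, mu13_2, mu13_3, Mdotg, Rdiv.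
  case_index k; case_index l; simpl; eapply has_partial_eq_val;
  try (solve_has_partial; fail); unfold dPi13, dmu13_3, dMdotg, Mdotg; simpl; ring.
Qed.

Definition dbracket13 g h j x : R :=
  sum_f_R0 (fun k => sum_f_R0 (fun l =>
    (pd j (pd k g) x * Pi13 x k l + pd k g x * dPi13 j x k l) * pd l h x
    + pd k g x * Pi13 x k l * pd j (pd l h) x) 5) 5.

Lemma bracket13_expand f g h x : Ck 2 D13 g -> Ck 2 D13 h -> D13 x ->
  bracket mu13_1 mu13_2 mu13_3 f (bracket mu13_1 mu13_2 mu13_3 g h) x =
  sum_f_R0 (fun i => sum_f_R0 (fun j => pd i f x * Pi13 x i j * dbracket13 g h j x) 5) 5.
Proof.
  intros Hg Hh Hx; apply bracket_of_partials; intros j Hj.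
  apply (has_partial_bracket D13 open_D13); auto.
  intros k l; now apply has_partial_Pi13.
Qed.

(* Bring every mixed second partial of f to the form pd i (pd j f) with i < j,
   so that ring sees their symmetry. *)
Ltac orient_second_partials f Hf Hx :=
  repeat match goal with
  | |- context [pd ?j (pd ?i f) ?x] =>
      let Hij := fresh in assert (Hij : (i < j)%nat) by lia; clear Hij;
      rewrite (schwarz D13 open_D13 f i j x Hf Hx ltac:(lia) ltac:(lia))
  end.

Lemma jacobi13 f g h x : Ck 2 D13 f -> Ck 2 D13 g -> Ck 2 D13 h -> D13 x ->
    bracket mu13_1 mu13_2 mu13_3 f (bracket mu13_1 mu13_2 mu13_3 g h) x
  + bracket mu13_1 mu13_2 mu13_3 g (bracket mu13_1 mu13_2 mu13_3 h f) x
  + bracket mu13_1 mu13_2 mu13_3 h (bracket mu13_1 mu13_2 mu13_3 f g) x = 0.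
Proof.
  intros Hf Hg Hh Hx.
  rewrite !bracket13_expand by auto.
  unfold dbracket13, Pi13, PiMat, dPi13, dmu13_3, dMdotg, mu13_1, mu13_2, mu13_3,
    Mdotg, kron; simpl.
  orient_second_partials f Hf Hx; orient_second_partials g Hg Hx;
  orient_second_partials h Hh Hx.
  generalize (/ g3 x); intros u; ring.
Qed.

(** * Polynomials are smooth; the Casimir *)

Inductive polynomial6 : (pt6 -> R) -> Prop :=
| poly_const c : polynomial6 (fun _ => c)
| poly_coord k : (k < 6)%nat -> polynomial6 (coord k)
| poly_add f g : polynomial6 f -> polynomial6 g -> polynomial6 (fun y => f y + g y)
| poly_mul f g : polynomial6 f -> polynomial6 g -> polynomial6 (fun y => f y * g y).

Lemma polynomial6_has_partial f : polynomial6 f -> forall j, (j < 6)%nat ->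
  exists g, polynomial6 g /\ forall x, has_partial j f x (g x).
Proof.
  induction 1 as [c|k Hk|f g _ IHf _ IHg|f g Hf IHf Hg IHg]; intros j Hj.
  - exists (fun _ => 0); split; [constructor|intros; apply has_partial_const].
  - exists (fun _ => kron j k); split; [constructor|intros; now apply has_partial_coord].
  - destruct (IHf j Hj) as [a [Ha Ka]], (IHg j Hj) as [b [Hb Kb]].
    exists (fun y => a y + b y); split; [now constructor|intros; now apply has_partial_plus].
  - destruct (IHf j Hj) as [a [Ha Ka]], (IHg j Hj) as [b [Hb Kb]].
    exists (fun y => a y * g y + f y * b y); split; [repeat constructor; auto|].
    intros; now apply has_partial_mult.
Qed.

Lemma Rabs_mult_sub_le a b a0 b0 e :
  Rabs (a - a0) < e -> Rabs (b - b0) < e -> e <= 1 ->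
  Rabs (a * b - a0 * b0) <= e * (1 + Rabs a0 + Rabs b0).
Proof.
  intros Ha Hb He.
  replace (a * b - a0 * b0) with ((a - a0) * (b - b0) + a0 * (b - b0) + b0 * (a - a0))
    by ring.
  pose proof (Rabs_pos (a - a0)); pose proof (Rabs_pos (b - b0));
  pose proof (Rabs_pos a0); pose proof (Rabs_pos b0).
  eapply Rle_trans; [eapply Rle_trans; [apply Rabs_triang|];
    apply Rplus_le_compat_r; apply Rabs_triang|].
  rewrite !Rabs_mult; nra.
Qed.

Lemma polynomial6_continuous U f : polynomial6 f -> continuous_on6 U f.
Proof.
  induction 1 as [c|k Hk|f g _ IHf _ IHg|f g _ IHf _ IHg]; intros x Hx eps He.
  - exists 1; split; [lra|]; intros; now rewrite Rminus_diag, Rabs_R0.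
  - exists eps; split; auto; intros y _ Hd.
    eapply Rle_lt_trans; [apply coord_dist6_le|]; auto.
  - destruct (IHf x Hx (eps / 2) ltac:(lra)) as [d1 [Hd1 K1]].
    destruct (IHg x Hx (eps / 2) ltac:(lra)) as [d2 [Hd2 K2]].
    exists (Rmin d1 d2); split; [now apply Rmin_pos|]; intros y Hy Hd.
    pose proof (Rmin_l d1 d2); pose proof (Rmin_r d1 d2).
    pose proof (K1 y Hy ltac:(lra)); pose proof (K2 y Hy ltac:(lra)).
    pose proof (Rabs_triang (f y - f x) (g y - g x)).
    replace (f y + g y - (f x + g x)) with ((f y - f x) + (g y - g x)) by ring; lra.
  - set (c := 1 + Rabs (f x) + Rabs (g x)).
    assert (Hc : 1 <= c) by (unfold c; pose proof (Rabs_pos (f x));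
      pose proof (Rabs_pos (g x)); lra).
    set (e := Rmin 1 (eps / (2 * c))).
    assert (He0 : 0 < e) by (apply Rmin_pos; [lra|apply Rdiv_lt_0_compat; lra]).
    assert (Hec : e * c <= eps / 2).
    { apply Rle_trans with (eps / (2 * c) * c); [apply Rmult_le_compat_r, Rmin_r; lra|].
      right; field; lra. }
    destruct (IHf x Hx e He0) as [d1 [Hd1 K1]].
    destruct (IHg x Hx e He0) as [d2 [Hd2 K2]].
    exists (Rmin d1 d2); split; [now apply Rmin_pos|]; intros y Hy Hd.
    pose proof (Rmin_l d1 d2); pose proof (Rmin_r d1 d2).
    pose proof (Rabs_mult_sub_le (f y) (g y) (f x) (g x) e
      (K1 y Hy ltac:(lra)) (K2 y Hy ltac:(lra)) (Rmin_l _ _)).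
    fold c in H1; lra.
Qed.

Lemma polynomial6_smooth U f : polynomial6 f -> smooth_on U f.
Proof.
  intros Hf k; revert f Hf; induction k; intros f Hf; simpl;
    [|split]; try now apply polynomial6_continuous.
  intros i Hi; destruct (polynomial6_has_partial f Hf i Hi) as [g [Hg K]].
  exists g; auto.
Qed.

Lemma polynomial6_C13 : polynomial6 C13.
Proof.
  unfold C13, Mdotg.
  repeat first [ apply poly_mul | apply poly_add
    | exact (poly_coord 0 ltac:(lia)) | exact (poly_coord 1 ltac:(lia))
    | exact (poly_coord 2 ltac:(lia)) | exact (poly_coord 3 ltac:(lia))
    | exact (poly_coord 4 ltac:(lia)) | exact (poly_coord 5 ltac:(lia)) ].
Qed.

Lemma pd_C13 j x : (j < 6)%nat -> pd j C13 x = kron j 5 * Mdotg x + g3 x * dMdotg j x.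
Proof.
  intros Hj; apply pd_of_has_partial; unfold C13, Mdotg.
  eapply has_partial_eq_val; [solve_has_partial|]; unfold dMdotg, Mdotg; ring.
Qed.

Lemma casimir13 : Casimir_on D13 mu13_1 mu13_2 mu13_3 C13.
Proof.
  split; [apply polynomial6_smooth, polynomial6_C13|].
  intros x Hx i Hi; unfold D13 in Hx.
  rewrite (sum_eq _ (fun j => PiMat mu13_1 mu13_2 mu13_3 x i j
                              * (kron j 5 * Mdotg x + g3 x * dMdotg j x)))
    by (intros j Hj; rewrite pd_C13 by lia; reflexivity).
  case_index i; unfold PiMat, dMdotg, mu13_1, mu13_2, mu13_3, Mdotg, kron; simpl;
    field; auto.
Qed.

Theorem mainTheorem13 :
  defines_Poisson_on D13 mu13_1 mu13_2 mu13_3 /\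
  Casimir_on D13 mu13_1 mu13_2 mu13_3 C13.
Proof.
  split; [|exact casimir13].
  intros f g h Hf Hg Hh x Hx; apply jacobi13; [apply Hf|apply Hg|apply Hh|exact Hx].
Qed.
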